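(* Let $K\subseteq\mathbb{R}^{n}$ be compact and let $T\subseteq\mathbb{R}^{n}$ be compact with non-empty interior. Then \[ M^{*}(K,T)\le N^{*}(K,-T)\quad\text{and}\quad\overline{M}_{\omega}(K,T)\le\overline{N}_{\omega}(K,-T). \] In particular, $M_{\omega}(K,T)\le N_{\omega}(K,-T)$.
   Context: $\mathbbm{1}_A$ is the indicator of $A$. $\mathcal{D}_{+}^{n}$ is the set of non-negative finite discrete measures on $\mathbb{R}^n$ (finite sums $\sum_i\omega_i\delta_{x_i}$, $\omega_i\ge0$) and $\mathcal{B}_{+}^{n}$ the non-negative regular Borel measures on $\mathbb{R}^n$; $(\nu*\mathbbm{1}_T)(x)=\int\mathbbm{1}_T(x-y)\,d\nu(y)$. Definitions: $N_\omega(K,T)=\inf\{\nu(\mathbb{R}^n):\nu\in\mathcal{D}_+^n,\ \nu*\mathbbm{1}_T\ge\mathbbm{1}_K\}$; $\overline{N}_\omega(K,T)=\inf\{\nu(\mathbb{R}^n):\nu\in\mathcal{D}_+^n,\ \mathrm{supp}(\nu)\subseteq K,\ \nu*\mathbbm{1}_T\ge\mathbbm{1}_K\}$; $N^{*}(K,T)=\inf\{\mu(\mathbb{R}^n):\mu\in\mathcal{B}_+^n,\ \mu*\mathbbm{1}_T\ge\mathbbm{1}_K\}$; $M_\omega(K,T)=\sup\{\nu(K):\nu\in\mathcal{D}_+^n,\ \nu*\mathbbm{1}_T\le1\text{ on }\mathbb{R}^n\}$; $\overline{M}_\omega(K,T)=\sup\{\nu(K):\nu\in\mathcal{D}_+^n,\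 (\nu*\mathbbm{1}_T)(x)\le1\ \forall x\in K\}$; $M^{*}(K,T)=\sup\{\mu(K):\mu\in\mathcal{B}_+^n,\ \mu*\mathbbm{1}_T\le1\text{ on }\mathbb{R}^n\}$. *)

From HB Require Import structures.
From mathcomp Require Import all_boot all_order all_algebra.
From mathcomp Require Import all_classical all_reals all_analysis.
Set Implicit Arguments. Unset Strict Implicit. Unset Printing Implicit Defensive.
Import Order.TTheory GRing.Theory Num.Theory.
Import numFieldNormedType.Exports.
Local Open Scope classical_set_scope.
Local Open Scope ring_scope.

(* R^n is modelled as row vectors 'rV[R]_n with their canonical normed topology. *)
Definition borelRn (R : realType) (n : nat) := g_sigma_algebraType (@open 'rV[R]_n).

Section Defs.
Variables (R : realType) (n : nat).
Local Notation V := 'rV[R]_n.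

Definition setNr (T : set V) : set V := [set - t | t in T].

Definition regular_measure (mu : {measure set (borelRn R n) -> \bar R}) : Prop :=
  forall A : set (borelRn R n), measurable A ->
    mu A = ereal_inf [set mu U | U in [set U : set V | open U /\ A `<=` U]] /\
    mu A = ereal_sup [set mu C | C in [set C : set V | compact C /\ C `<=` A]].

Definition bconv (mu : {measure set (borelRn R n) -> \bar R}) (T : set V) (x : V) : \bar R :=
  (\int[mu]_(y in [set: borelRn R n]) (\1_T (x - (y : V)) : R)%:E)%E.

(* ---------- finite discrete measures: sum_i w_i delta_{x_i}, w_i >= 0 ---------- *)
Definition discr := seq (R * V).
Definition dnonneg (s : discr) : Prop := forall p, p \in s -> 0 <= p.1.
Definition dmass (s : discr) : R := \sum_(p <- s) p.1.
Definition dmass_on (s : discr) (A : set V) : R := \sum_(p <- s | `[< A p.2 >]) p.1.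
Definition dconv (s : discr) (T : set V) (x : V) : R := \sum_(p <- s) p.1 * \1_T (x - p.2).
Definition dsupp_sub (s : discr) (A : set V) : Prop := forall p, p \in s -> 0 < p.1 -> A p.2.

Local Open Scope ereal_scope.

Definition N_omega (K T : set V) : \bar R :=
  ereal_inf [set (dmass s)%:E | s in
    [set s : discr | dnonneg s /\ forall x, ((\1_K x : R) <= dconv s T x)%R]].

Definition N_omega_bar (K T : set V) : \bar R :=
  ereal_inf [set (dmass s)%:E | s in
    [set s : discr | dnonneg s /\ dsupp_sub s K /\ forall x, ((\1_K x : R) <= dconv s T x)%R]].

Definition N_star (K T : set V) : \bar R :=
  ereal_inf [set mu [set: borelRn R n] | mu in
    [set mu : {measure set (borelRn R n) -> \bar R} |
      regular_measure mu /\ forall x, (\1_K x : R)%:E <= bconv mu T x]].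

Definition M_omega (K T : set V) : \bar R :=
  ereal_sup [set (dmass_on s K)%:E | s in
    [set s : discr | dnonneg s /\ forall x, (dconv s T x <= 1)%R]].

Definition M_omega_bar (K T : set V) : \bar R :=
  ereal_sup [set (dmass_on s K)%:E | s in
    [set s : discr | dnonneg s /\ forall x, K x -> (dconv s T x <= 1)%R]].

Definition M_star (K T : set V) : \bar R :=
  ereal_sup [set mu K | mu in
    [set mu : {measure set (borelRn R n) -> \bar R} |
      regular_measure mu /\ forall x, bconv mu T x <= 1%:E]].

End Defs.

(* Both inequalities are double counting.  If mu * 1_T <= 1 everywhere and
   nu * 1_(-T) >= 1 on K, then
     mu(K) <= \int (nu * 1_(-T)) dmu = \iint 1_T(y - x) dmu(x) dnu(y)
           = \int (mu * 1_T) dnu <= nu(R^n):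
   for discrete measures this exchanges two finite sums, for Borel measures it
   is Tonelli's theorem.  Tonelli applies to mu restricted to K, which is finite
   because T contains a ball and finitely many translates of it cover K, and to
   nu, which may be assumed finite. *)

From HB Require Import structures.
From mathcomp Require Import all_boot all_order all_algebra.
From mathcomp Require Import all_classical all_reals all_analysis.
From mathcomp Require Import finmap measurable_realfun.
Import Order.TTheory GRing.Theory Num.Theory.
Import numFieldNormedType.Exports.
Local Open Scope classical_set_scope.
Local Open Scope ring_scope.

Section discrete.
Variables (R : realType) (n : nat).
Local Notation V := 'rV[R]_n.

Lemma indic_setNrB (T : set V) (a b : V) :
  \1_(setNr T) (a - b) = \1_T (b - a) :> R.
Proof.
rewrite !indicE; suff -> : (a - b \in setNr T) = (b - a \in T) by [].
apply/idP/idP => /set_mem.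
- by case=> t Tt /eqP; rewrite -opprB eqr_opp => /eqP <-; apply/mem_set.
- by move=> Tba; apply/mem_set; exists (b - a); rewrite ?opprB.
Qed.

Lemma dconv_ge0 (s : discr R n) (T : set V) x : dnonneg s -> 0 <= dconv s T x.
Proof.
move=> s0; rewrite /dconv big_seq; apply: sumr_ge0 => p ps.
by rewrite mulr_ge0 ?s0 // indicE.
Qed.

Lemma dpacking_le_dcovering (s s' : discr R n) (K T : set V) :
  dnonneg s -> dnonneg s' ->
  (forall x, K x -> 1 <= dconv s' (setNr T) x) ->
  (forall q, q \in s' -> 0 < q.1 -> dconv s T q.2 <= 1) ->
  dmass_on s K <= dmass s'.
Proof.
move=> s0 s'0 s'_cover s_pack.
have double_count : \sum_(p <- s) p.1 * dconv s' (setNr T) p.2 =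
                    \sum_(q <- s') q.1 * dconv s T q.2.
  rewrite /dconv; under eq_bigr => p _ do rewrite big_distrr /=.
  rewrite exchange_big /=; apply: eq_bigr => q _; rewrite big_distrr /=.
  by apply: eq_bigr => p _; rewrite indic_setNrB mulrCA.
apply: (@le_trans _ _ (\sum_(p <- s) p.1 * dconv s' (setNr T) p.2)).
  rewrite /dmass_on [leRHS](bigID (fun p => `[< K p.2 >])) /= -[leLHS]addr0.
  apply: lerD; rewrite big_seq_cond [leRHS]big_seq_cond.
    apply: ler_sum => p /andP[ps /asboolP Kp].
    by rewrite -[leLHS]mulr1 ler_wpM2l ?s0 ?s'_cover.
  by apply: sumr_ge0 => p /andP[ps _]; rewrite mulr_ge0 ?s0 ?dconv_ge0.
rewrite double_count /dmass big_seq [leRHS]big_seq; apply: ler_sum => q qs.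
have [q_gt0|q_le0] := ltP 0 q.1.
  by rewrite -[leRHS]mulr1 ler_wpM2l ?s'0 ?s_pack.
have -> : q.1 = 0 by apply/eqP; rewrite eq_le q_le0 s'0.
by rewrite mul0r.
Qed.

End discrete.

Lemma mx_norm_ltE {K : realDomainType} {m n} (w : 'M[K]_(m, n)) e : 0 < e ->
  (`|w| < e) = [forall ij, `|w ij.1 ij.2| < e].
Proof.
move=> e_gt0; rewrite (_ : `|w| = mx_norm w) // mx_normrE.
apply/bigmax_ltP/forallP => [[_ lt_e] ij|lt_e]; first exact: lt_e.
by split=> // ij _; exact: lt_e.
Qed.

Lemma compact_finite_ball_cover {R : realType} {X : normedModType R}
    (T : set X) e : compact T -> 0 < e ->
  exists F : {fset X}, [set` F] `<=` T /\ T `<=` \bigcup_(t in [set` F]) ball t e.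
Proof.
rewrite compact_cover => cover e_gt0.
have [t _|t Tt|F FT TF] := cover X T (fun t => ball t e); first exact: ball_open.
  by exists t => //; exact: ballxx.
by exists F; split=> // t Ft; apply/set_mem/FT.
Qed.

Lemma closed_ball_approx {R : realType} {X : normedModType R} (T : set X) w :
  closed T -> (forall k : nat, exists2 t, T t & ball t k.+1%:R^-1 w) -> T w.
Proof.
move=> cT near_w; rewrite (closure_id T).1 // => A /nbhs_ballP[e /= e_gt0 eA].
have [t Tt tw] := near_w (Num.truncn e^-1).
exists t; split=> //; apply/eA/ball_sym/(le_ball _ tw).
rewrite -[leRHS]invrK lef_pV2 ?posrE ?invr_gt0 //.
exact/ltW/truncnS_gt.
Qed.

Section double_counting.
Context {d1 d2} {X : measurableType d1} {Y : measurableType d2} {R : realType}.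
Variables (m1 : {sigma_finite_measure set X -> \bar R})
          (m2 : {sigma_finite_measure set Y -> \bar R}).
Local Open Scope ereal_scope.

Lemma measure_le_double_count (A : set X) (D : set (X * Y)) :
  measurable A -> measurable D ->
  (forall x, A x -> 1 <= \int[m2]_y (\1_D (x, y) : R)%:E) ->
  (forall y, \int[m1]_x (\1_D (x, y) : R)%:E <= 1) ->
  m1 A <= m2 setT.
Proof.
move=> mA mD A_cover D_pack.
pose f z := (\1_D z : R)%:E.
have mf : measurable_fun [set: (X * Y)%type] f.
  by apply/measurable_EFinP/measurable_indic.
have f0 z : 0 <= f z by rewrite lee_fin indicE.
rewrite -[X in m1 X <= _](setIT A) -integral_indic //.
apply: (@le_trans _ _ (\int[m1]_x \int[m2]_y f (x, y))).
  apply: ge0_le_integral => //.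
  - exact/measurable_EFinP/measurable_indic.
  - exact: measurable_fun_fubini_tonelli_F.
  move=> x _; rewrite indicE; have [/set_mem Ax|_] := boolP (x \in A).
    exact: A_cover.
  by apply: integral_ge0.
rewrite (fubini_tonelli f mf f0).
apply: (@le_trans _ _ (\int[m2]_y (cst 1 y))); last by rewrite integral_cst // mul1e.
apply: ge0_le_integral => //.
- by move=> y _; apply: integral_ge0.
- exact: measurable_fun_fubini_tonelli_G.
- by move=> y _; exact: D_pack.
Qed.

End double_counting.

Section borelRn.
Variables (R : realType) (n : nat).
Local Notation V := 'rV[R]_n.
Local Notation B := (borelRn R n).

Lemma open_measurable_borelRn (A : set V) : open A -> measurable (A : set B).
Proof. exact: sub_sigma_algebra. Qed.

Lemma closed_measurable_borelRn (A : set V) : closed A -> measurable (A : set B).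
Proof.
move=> cA; rewrite -[A]setCK; apply: measurableC.
by apply: open_measurable_borelRn; rewrite openC.
Qed.

Lemma compact_measurable_borelRn (A : set V) : compact A -> measurable (A : set B).
Proof.
by move=> cA; apply: closed_measurable_borelRn; exact: compact_closed cA.
Qed.

Lemma measurable_coord_borelRn (i : 'I_1) (j : 'I_n) :
  measurable_fun [set: B] (fun v : B => (v : V) i j).
Proof.
apply: (measurability _ (RGenOpens.measurableE R)).
move=> _ [_ [a [b ->] <-]]; rewrite setTI; apply: open_measurable_borelRn.
by apply: (continuousP _).1; [exact: coord_continuous | exact: interval_open].
Qed.

Lemma measurable_subr_ball (t : V) e : 0 < e ->
  measurable [set z : (B * B)%type | ball t e ((z.2 : V) - (z.1 : V))].
Proof.
move=> e_gt0.
have -> : [set z : (B * B)%type | ball t e ((z.2 : V) - (z.1 : V))] =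
    \bigcap_(ij in [set: 'I_1 * 'I_n]) ((fun z : B * B =>
      t ij.1 ij.2 - ((z.2 : V) ij.1 ij.2 - (z.1 : V) ij.1 ij.2)) @^-1` `]-e, e[).
  apply/seteqP; split=> z /=; rewrite -ball_normE /= mx_norm_ltE //.
    by move=> /forallP lt_e ij _; have := lt_e ij; rewrite !mxE /= in_itv /= ltr_norml.
  by move=> lt_e; apply/forallP => ij; have := lt_e ij I; rewrite !mxE /= in_itv /= ltr_norml.
apply: fin_bigcap_measurable; first exact: finite_finset.
move=> [i j] _; rewrite -[X in measurable X]setTI.
apply: measurable_funB => //.
apply: measurable_funB.
- exact: measurableT_comp (measurable_coord_borelRn i j) measurable_snd.
- exact: measurableT_comp (measurable_coord_borelRn i j) measurable_fst.
Qed.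

(* The product sigma-algebra is not known to contain the closed subsets of
   V * V, so the set is written through finite 1/k-nets of T. *)
Lemma measurable_subr_compact (T : set V) : compact T ->
  measurable [set z : (B * B)%type | T ((z.2 : V) - (z.1 : V))].
Proof.
move=> cT; have cover k : exists F : {fset V},
    [set` F] `<=` T /\ T `<=` \bigcup_(t in [set` F]) ball t k.+1%:R^-1.
  by apply: compact_finite_ball_cover; rewrite ?invr_gt0.
have cloT : closed T := compact_closed (@norm_hausdorff _ V) cT.
pose F k := projT1 (cid (cover k)).
have FT k : [set` F k] `<=` T by have [] := projT2 (cid (cover k)).
have TF k : T `<=` \bigcup_(t in [set` F k]) ball t k.+1%:R^-1.
  by have [] := projT2 (cid (cover k)).
have -> : [set z : (B * B)%type | T ((z.2 : V) - (z.1 : V))] =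
    \bigcap_k \bigcup_(t in [set` F k])
      [set z : (B * B)%type | ball t k.+1%:R^-1 ((z.2 : V) - (z.1 : V))].
  apply/seteqP; split=> z /=; first by move=> Tz k _; exact: TF.
  move=> near_z; apply: (closed_ball_approx T ((z.2 : V) - (z.1 : V)) cloT).
  by move=> k; have [t /FT Tt zt] := near_z k I; exists t.
apply: bigcapT_measurable => k; apply: fin_bigcup_measurable; first exact: finite_fset.
by move=> t _; apply: measurable_subr_ball.
Qed.

Lemma closed_reflect_shift (T : set V) (y : V) :
  closed T -> closed [set x : V | T (y - x)].
Proof.
have cont_sub : continuous (fun x : V => y - x).
  by move=> x; apply: continuousB; [exact: cst_continuous | exact: cvg_id].
by move=> cT; exact: (continuous_closedP _).1 cont_sub _ cT.
Qed.

Lemma bconv_closedE (mu : {measure set B -> \bar R}) (T : set V) y : closed T ->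
  bconv mu T y = mu [set x : B | T (y - (x : V))].
Proof.
move=> cT; rewrite /bconv -[X in _ = mu X]setIT -integral_indic //.
by apply: closed_measurable_borelRn; exact: closed_reflect_shift.
Qed.

Lemma bconv_le1_compact_lty (mu : {measure set B -> \bar R}) (K T : set V) :
  compact K -> closed T -> interior T !=set0 ->
  (forall y, bconv mu T y <= 1)%E -> (mu K < +oo)%E.
Proof.
move=> cK cT [t0 /nbhs_ballP[r /= r_gt0 rT]] mu_pack.
have ball_le1 c : (mu (ball c r) <= 1)%E.
  (* ball c r lies in c + t0 - T, whose measure is bconv mu T (c + t0). *)
  apply: le_trans (mu_pack (c + t0)); rewrite bconv_closedE //.
  apply: le_measure.
  - by apply/mem_set; apply: open_measurable_borelRn; exact: ball_open.
  - by apply/mem_set; apply: closed_measurable_borelRn; exact: closed_reflect_shift.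
  move=> x; rewrite -!ball_normE /= => cx; apply: rT; rewrite -ball_normE /=.
  by rewrite (addrC c) -addrA opprD addNKr normrN.
have [F [_ KF]] := compact_finite_ball_cover K r cK r_gt0.
rewrite (le_lt_trans (content_sub_fsum mu (finite_fset F) _
  (compact_measurable_borelRn K cK) KF)) //.
  by move=> c _; apply: open_measurable_borelRn; exact: ball_open.
rewrite (le_lt_trans (lee_fsum (finite_fset F) (fun c _ => ball_le1 c))) //.
by rewrite fsumEFin ?ltry // finite_fset.
Qed.

Lemma bpacking_le_bcovering (mu mu' : {measure set B -> \bar R}) (K T : set V) :
  compact K -> compact T -> interior T !=set0 ->
  (forall y, bconv mu T y <= 1)%E ->
  (forall x, K x -> 1 <= bconv mu' (setNr T) x)%E ->
  (mu K <= mu' setT)%E.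
Proof.
move=> cK cT iT mu_pack mu'_cover.
have [mu'T|mu'T] := leP +oo%E (mu' setT); first exact: le_trans (leey _) mu'T.
have cloT : closed T := compact_closed (@norm_hausdorff _ V) cT.
have mK := compact_measurable_borelRn K cK.
pose m1 := mfrestr mK (bconv_le1_compact_lty mu K T cK cloT iT mu_pack).
pose m2 := mfrestr measurableT mu'T.
have m2E : (m2 : set B -> \bar R) = mu'.
  by apply/funext => A; rewrite /m2 /mfrestr /mrestr setIT.
have -> : mu K = m1 K by rewrite /m1 /= /mfrestr /mrestr setIid.
rewrite -m2E; apply: (measure_le_double_count m1 m2 K _ mK (measurable_subr_compact T cT)).
  move=> x Kx; apply: le_trans (mu'_cover x Kx) _.
  rewrite /bconv le_eqVlt; apply/orP; left; apply/eqP.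
  congr (integral _ _ _); first by rewrite m2E.
  by apply/funext => y; rewrite indic_setNrB.
move=> y; apply: le_trans (mu_pack y); rewrite bconv_closedE //.
have mS : measurable ([set x : V | T (y - x)] : set B).
  by apply: closed_measurable_borelRn; exact: closed_reflect_shift.
rewrite [X in (X <= _)%E](_ : _ = \int[m1]_x (\1_([set x : V | T (y - x)] : set B) x : R)%:E)%E //.
rewrite integral_indic // /m1 /= /mfrestr /mrestr setIT.
apply: le_measure; last exact: subIsetl.
- by apply/mem_set/measurableI.
- exact/mem_set.
Qed.

End borelRn.

Theorem proposition2p1 (R : realType) (n : nat) (K T : set 'rV[R]_n) :
  compact K -> compact T -> interior T !=set0 ->
  [/\ (M_star K T <= N_star K (setNr T))%E,
      (M_omega_bar K T <= N_omega_bar K (setNr T))%E &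
      (M_omega K T <= N_omega K (setNr T))%E].
Proof.
have cover_K (s : discr R n) : (forall x, \1_K x <= dconv s (setNr T) x) ->
    forall x, K x -> 1 <= dconv s (setNr T) x.
  by move=> s_cover x Kx; have := s_cover x; rewrite indicE mem_set.
move=> cK cT iT; split.
- apply/ereal_supP => _ [mu [_ mu_pack] <-]; apply/ereal_infP => _ [mu' [_ mu'_cover] <-].
  apply: bpacking_le_bcovering cK cT iT mu_pack _ => x Kx.
  by have := mu'_cover x; rewrite indicE mem_set.
- apply/ereal_supP => _ [s [s0 s_pack] <-].
  apply/ereal_infP => _ [s' [s'0 [s'_supp s'_cover]] <-].
  rewrite lee_fin; apply: dpacking_le_dcovering s0 s'0 (cover_K _ s'_cover) _.
  by move=> q qs' q_gt0; apply/s_pack/s'_supp.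
- apply/ereal_supP => _ [s [s0 s_pack] <-]; apply/ereal_infP => _ [s' [s'0 s'_cover] <-].
  rewrite lee_fin; apply: dpacking_le_dcovering s0 s'0 (cover_K _ s'_cover) _.
  by move=> q _ _; exact: s_pack.
Qed.
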